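(* Let $\Gamma((r^S)_{S\subseteq I})$ be a quitting game satisfying $r^i_i=0$ for all $i\in I$. If all players are abnormal (i.e. $I_*=\emptyset$), then for every $\varepsilon>0$ the game has a stationary $\varepsilon$-equilibrium.
   Context: A quitting game $\Gamma((r^S)_{S\subseteq I})$: finite player set $I=[N]$, vectors $r^S\in[-1,1]^N$ for all $S\subseteq I$; at each stage $t\in\mathbb N$ each player chooses to continue or quit; with $t^*$ the first stage at which some player quits and $S^*$ the set of players quitting then ($S^*=\emptyset$ if nobody ever quits), the payoff is $r^{S^*}$. Write $r^i:=r^{\{i\}}$. A (behavior) strategy of player $i$ is a sequence $x_i=(x_i^t)_{t\in\mathbb N}\subset[0,1]$, $x_i^t$ being the probability of quitting at stage $t$ if nobody quit before; it is stationary if $x_i^t$ does not depend on $t$. $\gamma(x):=\mathbb E_x[r^{S^*}]$. A profile $x$ is an $\varepsilon$-equilibrium if $\gamma_i(x)\ge\gamma_i(x_i',x_{-i})-\varepsilon$ for all $i$ and all strategies $x_i'$. Normal players: $I_0:=I$, $I_{l+1}:=\{i\in I_l:\ \exists j\in I_l,\ j\neq i,\ r^j_i\le0\}$, and $I_*:=\bigcap_{l}I_l$. Players in $I_*$ are normal, the others abnormal. *)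

From Stdlib Require Import Reals Lra Lia List Arith.
Import ListNotations.
Open Scope R_scope.

(* Players are 0, ..., N-1.  A subset S of players is a list of booleans of
   length N; player i belongs to S iff nth i S false = true. *)
Definition mem (S : list bool) (i : nat) : bool := nth i S false.

Fixpoint all_subsets (n : nat) : list (list bool) :=
  match n with
  | O => [nil]
  | Datatypes.S m => flat_map (fun l => [false :: l; true :: l]) (all_subsets m)
  end.

Definition empty_set (N : nat) : list bool := repeat false N.
Definition singleton (N j : nat) : list bool := map (fun k => Nat.eqb k j) (seq 0 N).
Definition nonempty (S : list bool) : bool := existsb (fun b => b) S.

Definition Rsum_list (l : list R) : R := fold_right Rplus 0 l.
Definition Rprod_upto (n : nat) (f : nat -> R) : R := fold_right Rmult 1 (map f (seq 0 n)).

(* Payoff function: r S i = r^S_i. *)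
Definition payoffs := list bool -> nat -> R.

(* A strategy profile: x i t = probability that player i quits at stage t
   (stages indexed from 0) given nobody quit before. *)
Definition profile := nat -> nat -> R.

Definition is_strategy (y : nat -> R) : Prop := forall t, 0 <= y t <= 1.
Definition is_profile (N : nat) (x : profile) : Prop :=
  forall i, (i < N)%nat -> is_strategy (x i).
Definition stationary (N : nat) (x : profile) : Prop :=
  forall i t, (i < N)%nat -> x i t = x i 0%nat.

Definition stage_prob (N : nat) (x : profile) (S : list bool) (t : nat) : R :=
  Rprod_upto N (fun i => if mem S i then x i t else 1 - x i t).

Definition cont_prob (N : nat) (x : profile) (t : nat) : R :=
  Rprod_upto N (fun i => 1 - x i t).
Definition surv (N : nat) (x : profile) (t : nat) : R :=
  Rprod_upto t (cont_prob N x).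

(* Expected payoff of player i when the game is stopped after n stages with
   payoff r^emptyset if nobody has quit.  Its limit as n -> oo is
   gamma_i(x) = E_x[r^{S*}_i]. *)
Definition partial_payoff (N : nat) (r : payoffs) (x : profile) (i n : nat) : R :=
  Rsum_list (map (fun t =>
      surv N x t *
      Rsum_list (map (fun S => stage_prob N x S t * r S i)
                     (filter nonempty (all_subsets N))))
    (seq 0 n))
  + surv N x n * r (empty_set N) i.

Definition payoff_is (N : nat) (r : payoffs) (x : profile) (i : nat) (v : R) : Prop :=
  Un_cv (partial_payoff N r x i) v.

Definition deviate (x : profile) (i : nat) (y : nat -> R) : profile :=
  fun j => if Nat.eqb j i then y else x j.

Definition eps_equilibrium (N : nat) (r : payoffs) (eps : R) (x : profile) : Prop :=
  is_profile N x /\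
  forall i, (i < N)%nat ->
    exists v, payoff_is N r x i v /\
      forall y, is_strategy y ->
        forall v', payoff_is N r (deviate x i y) i v' -> v >= v' - eps.

Fixpoint in_I (N : nat) (r : payoffs) (l : nat) (i : nat) : Prop :=
  match l with
  | O => (i < N)%nat
  | Datatypes.S l' => in_I N r l' i /\
      exists j, in_I N r l' j /\ j <> i /\ r (singleton N j) i <= 0
  end.

Definition normal (N : nat) (r : payoffs) (i : nat) : Prop :=
  forall l, in_I N r l i.

From Stdlib Require Import Reals List Lra Lia Classical FunctionalExtensionality.
Import ListNotations.
Open Scope R_scope.

(* Against stationary opponents a player faces a stopping problem, in which no strategy beats
   the better of quitting at once (payoff Q) and never quitting (payoff W); so a stationary
   profile is an eps-equilibrium as soon as every player's payoff is within eps of both.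

   If some player i has a "threat" j with r^j_i <= 0 (that is, I_1 is nonempty), let I_l be
   the last nonempty level, which exists because every player is abnormal, and k1 in I_l with
   threat k2.  Every other player j strictly prefers k1 to quit alone, otherwise j would belong
   to I_(l+1).  Then k1 quitting with small probability p and k2 with much smaller probability
   q is an eps-equilibrium.  Otherwise r^j_i > 0 whenever j <> i: if r^emptyset_k <= 0 for some
   k, let k alone quit with small probability; if not, let nobody ever quit. *)

Lemma Rsum_list_app l1 l2 : Rsum_list (l1 ++ l2) = Rsum_list l1 + Rsum_list l2.
Proof. induction l1 as [|a l1 IH]; simpl; [ring|]. unfold Rsum_list in *; simpl; rewrite IH; ring. Qed.

Lemma Rsum_list_map_add {A} (f g : A -> R) l :
  Rsum_list (map (fun x => f x + g x) l) = Rsum_list (map f l) + Rsum_list (map g l).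
Proof. induction l as [|a l IH]; unfold Rsum_list in *; simpl; [ring|]. rewrite IH; ring. Qed.

Lemma Rsum_list_map_scal {A} (c : R) (f : A -> R) l :
  Rsum_list (map (fun x => c * f x) l) = c * Rsum_list (map f l).
Proof. induction l as [|a l IH]; unfold Rsum_list in *; simpl; [ring|]. rewrite IH; ring. Qed.

Lemma Rsum_list_map_ext_in {A} (f g : A -> R) l :
  (forall x, In x l -> f x = g x) -> Rsum_list (map f l) = Rsum_list (map g l).
Proof. intro H. f_equal. apply map_ext_in. exact H. Qed.

Lemma Rsum_list_filter {A} (p : A -> bool) (g : A -> R) l :
  Rsum_list (map g (filter p l)) = Rsum_list (map (fun x => if p x then g x else 0) l).
Proof.
  induction l as [|a l IH]; simpl; auto.
  destruct (p a); unfold Rsum_list in *; simpl; rewrite IH; ring.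
Qed.

Lemma Rsum_list_flat_map {A B} (h : B -> R) (g : A -> list B) l :
  Rsum_list (map h (flat_map g l)) = Rsum_list (map (fun x => Rsum_list (map h (g x))) l).
Proof. induction l as [|a l IH]; simpl; auto. rewrite map_app, Rsum_list_app, IH. reflexivity. Qed.

Lemma Rsum_list_seq_S (h : nat -> R) n :
  Rsum_list (map h (seq 0 (S n))) = Rsum_list (map h (seq 0 n)) + h n.
Proof. rewrite seq_S, map_app, Rsum_list_app. unfold Rsum_list. simpl. ring. Qed.

Lemma Rprod_upto_shift n f : Rprod_upto (S n) f = f 0%nat * Rprod_upto n (fun k => f (S k)).
Proof.
  unfold Rprod_upto. rewrite <- cons_seq. simpl. do 2 f_equal.
  rewrite <- seq_shift, map_map. reflexivity.
Qed.

Lemma Rprod_upto_S n f : Rprod_upto (S n) f = Rprod_upto n f * f n.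
Proof.
  unfold Rprod_upto. rewrite seq_S, map_app, fold_right_app. simpl.
  generalize (map f (seq 0 n)). intro l.
  induction l as [|a l IH]; simpl; [ring|]. rewrite IH. ring.
Qed.

Lemma Rprod_upto_ext n f g :
  (forall k, (k < n)%nat -> f k = g k) -> Rprod_upto n f = Rprod_upto n g.
Proof.
  intro H. unfold Rprod_upto. f_equal. apply map_ext_in.
  intros a Ha. apply in_seq in Ha. apply H. lia.
Qed.

Lemma Rprod_upto_eq1 n f : (forall k, (k < n)%nat -> f k = 1) -> Rprod_upto n f = 1.
Proof.
  induction n as [|n IH]; intro H; [reflexivity|].
  rewrite Rprod_upto_S, IH, H by auto. ring.
Qed.

Lemma Rprod_upto_extract n f i : (i < n)%nat ->
  Rprod_upto n f = f i * Rprod_upto n (fun k => if Nat.eqb k i then 1 else f k).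
Proof.
  revert f i. induction n as [|n IH]; intros f i Hi; [lia|].
  rewrite !Rprod_upto_shift. destruct i as [|i]; simpl.
  - f_equal. ring.
  - rewrite (IH (fun k => f (S k)) i) by lia. ring.
Qed.

Lemma Rprod_upto_single n f k1 : (k1 < n)%nat ->
  (forall k, (k < n)%nat -> k <> k1 -> f k = 1) -> Rprod_upto n f = f k1.
Proof.
  intros H1 H. rewrite (Rprod_upto_extract n f k1 H1), Rprod_upto_eq1; [ring|].
  intros k Hk. destruct (Nat.eqb_spec k k1); auto.
Qed.

Lemma Rprod_upto_pair n f k1 k2 : (k1 < n)%nat -> (k2 < n)%nat -> k1 <> k2 ->
  (forall k, (k < n)%nat -> k <> k1 -> k <> k2 -> f k = 1) ->
  Rprod_upto n f = f k1 * f k2.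
Proof.
  intros H1 H2 H12 H. rewrite (Rprod_upto_extract n f k1 H1), (Rprod_upto_extract n _ k2 H2).
  rewrite Rprod_upto_eq1.
  - apply Nat.eqb_neq in H12. rewrite Nat.eqb_sym, H12. ring.
  - intros k Hk. destruct (Nat.eqb_spec k k2); auto. destruct (Nat.eqb_spec k k1); auto.
Qed.

Definition expect_subsets (n : nat) (w : nat -> bool -> R) (F : list bool -> R) : R :=
  Rsum_list (map (fun S => Rprod_upto n (fun k => w k (mem S k)) * F S) (all_subsets n)).

Definition set_weight (w : nat -> bool -> R) (i : nat) (v : bool -> R) : nat -> bool -> R :=
  fun j => if Nat.eqb j i then v else w j.

Definition dirac (c : bool) : bool -> R := fun b => if Bool.eqb c b then 1 else 0.

Definition set_bit (c : nat -> bool) (k : nat) (v : bool) : nat -> bool :=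
  fun j => if Nat.eqb j k then v else c j.

Lemma expect_subsets_S n w F : expect_subsets (S n) w F =
  w 0%nat false * expect_subsets n (fun k => w (S k)) (fun l => F (false :: l)) +
  w 0%nat true * expect_subsets n (fun k => w (S k)) (fun l => F (true :: l)).
Proof.
  unfold expect_subsets. simpl all_subsets. rewrite Rsum_list_flat_map.
  rewrite <- !Rsum_list_map_scal, <- Rsum_list_map_add.
  apply Rsum_list_map_ext_in. intros l _. unfold Rsum_list at 1. simpl.
  rewrite !Rprod_upto_shift. unfold mem. simpl. ring.
Qed.

Lemma expect_subsets_ext n w w' F :
  (forall k b, (k < n)%nat -> w k b = w' k b) -> expect_subsets n w F = expect_subsets n w' F.
Proof.
  intro H. apply Rsum_list_map_ext_in. intros S _. f_equal.
  apply Rprod_upto_ext. intros; apply H; auto.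
Qed.

Lemma set_weight_shift w i v :
  (fun k => set_weight w (S i) v (S k)) = set_weight (fun k => w (S k)) i v.
Proof. reflexivity. Qed.

Lemma expect_subsets_pivot n w F i : (i < n)%nat ->
  expect_subsets n w F = w i true * expect_subsets n (set_weight w i (dirac true)) F
                       + w i false * expect_subsets n (set_weight w i (dirac false)) F.
Proof.
  revert w F i. induction n as [|n IH]; intros w F i Hi; [lia|].
  rewrite !expect_subsets_S. destruct i as [|i].
  - unfold set_weight, dirac; simpl. ring.
  - rewrite (IH _ (fun l => F (false :: l)) i), (IH _ (fun l => F (true :: l)) i) by lia.
    rewrite !set_weight_shift. cbn [set_weight Nat.eqb]. ring.
Qed.

Lemma expect_subsets_dirac n w c F :
  (forall k b, (k < n)%nat -> w k b = dirac (c k) b) ->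
  expect_subsets n w F = F (map c (seq 0 n)).
Proof.
  revert w c F. induction n as [|n IH]; intros w c F H.
  - unfold expect_subsets, Rsum_list, Rprod_upto. simpl. ring.
  - rewrite expect_subsets_S, <- cons_seq, <- seq_shift. cbn [map]. rewrite map_map.
    rewrite (IH (fun k => w (S k)) (fun k => c (S k)) (fun l => F (false :: l))),
            (IH (fun k => w (S k)) (fun k => c (S k)) (fun l => F (true :: l)))
      by (intros; apply H; lia).
    rewrite !H by lia. unfold dirac. destruct (c 0%nat); simpl; ring.
Qed.

Lemma expect_subsets_one_random n (w : nat -> bool -> R) F k1 (p : R) c : (k1 < n)%nat ->
  (forall b, w k1 b = if b then p else 1 - p) ->
  (forall k b, (k < n)%nat -> k <> k1 -> w k b = dirac (c k) b) ->
  expect_subsets n w F = p * F (map (set_bit c k1 true) (seq 0 n))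
                       + (1 - p) * F (map (set_bit c k1 false) (seq 0 n)).
Proof.
  intros H1 Hw1 Hw. rewrite (expect_subsets_pivot n w F k1 H1), !Hw1.
  rewrite (expect_subsets_dirac n _ (set_bit c k1 true)),
          (expect_subsets_dirac n _ (set_bit c k1 false)); [ring| |];
  intros k b Hk; unfold set_weight, set_bit; destruct (Nat.eqb_spec k k1); auto.
Qed.

Lemma expect_subsets_two_random n (w : nat -> bool -> R) F k1 k2 (p q : R) c :
  (k1 < n)%nat -> (k2 < n)%nat -> k1 <> k2 ->
  (forall b, w k1 b = if b then p else 1 - p) ->
  (forall b, w k2 b = if b then q else 1 - q) ->
  (forall k b, (k < n)%nat -> k <> k1 -> k <> k2 -> w k b = dirac (c k) b) ->
  expect_subsets n w F =
      p * (q * F (map (set_bit (set_bit c k1 true) k2 true) (seq 0 n))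
           + (1 - q) * F (map (set_bit (set_bit c k1 true) k2 false) (seq 0 n)))
    + (1 - p) * (q * F (map (set_bit (set_bit c k1 false) k2 true) (seq 0 n))
           + (1 - q) * F (map (set_bit (set_bit c k1 false) k2 false) (seq 0 n))).
Proof.
  intros H1 H2 H12 Hw1 Hw2 Hw. rewrite (expect_subsets_pivot n w F k1 H1), !Hw1.
  apply Nat.eqb_neq in H12 as H12b. rewrite Nat.eqb_sym in H12b.
  rewrite (expect_subsets_one_random n _ F k2 q (set_bit c k1 true) H2),
          (expect_subsets_one_random n _ F k2 q (set_bit c k1 false) H2); [ring|..];
    intros; unfold set_weight, set_bit; try rewrite H12b; auto.
  all: destruct (Nat.eqb_spec k k1); auto.
Qed.

Definition stage_weight (x : profile) (t : nat) : nat -> bool -> R :=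
  fun k b => if b then x k t else 1 - x k t.

Definition stage_payoff (r : payoffs) (i : nat) (S : list bool) : R :=
  if nonempty S then r S i else 0.

Lemma stage_sum_expect N x r i t :
  Rsum_list (map (fun S => stage_prob N x S t * r S i) (filter nonempty (all_subsets N)))
  = expect_subsets N (stage_weight x t) (stage_payoff r i).
Proof.
  rewrite Rsum_list_filter. apply Rsum_list_map_ext_in. intros S _.
  unfold stage_payoff, stage_prob, stage_weight. destruct (nonempty S); ring.
Qed.

Lemma deviate_self x i : deviate x i (x i) = x.
Proof.
  apply functional_extensionality; intro j. unfold deviate.
  destruct (Nat.eqb_spec j i); subst; reflexivity.
Qed.

Section Stationary.

Variables (N : nat) (r : payoffs) (x : profile) (i : nat).
Hypotheses (Hst : stationary N x) (Hi : (i < N)%nat).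

(* Expected stage payoff of [i] when it quits, resp. stays, against the opponents' stationary
   strategies; a stage where nobody quits counts [0]. *)
Definition quit_value : R :=
  expect_subsets N (set_weight (stage_weight x 0) i (dirac true)) (stage_payoff r i).
Definition cont_value : R :=
  expect_subsets N (set_weight (stage_weight x 0) i (dirac false)) (stage_payoff r i).
Definition others_stay : R :=
  Rprod_upto N (fun k => if Nat.eqb k i then 1 else 1 - x k 0%nat).

Lemma expect_stage_deviate y t :
  expect_subsets N (stage_weight (deviate x i y) t) (stage_payoff r i) =
  y t * quit_value + (1 - y t) * cont_value.
Proof.
  assert (Hothers : forall v, expect_subsets N (set_weight (stage_weight (deviate x i y) t) i v)
      (stage_payoff r i) = expect_subsets N (set_weight (stage_weight x 0) i v) (stage_payoff r i)).
  { intro v. apply expect_subsets_ext. intros k b Hk. unfold set_weight.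
    destruct (Nat.eqb_spec k i) as [|Hki]; auto. unfold stage_weight, deviate.
    apply Nat.eqb_neq in Hki. rewrite Hki, (Hst k t Hk). reflexivity. }
  rewrite (expect_subsets_pivot N _ _ i Hi), !Hothers.
  unfold stage_weight, deviate. rewrite Nat.eqb_refl. reflexivity.
Qed.

Lemma cont_prob_deviate y t :
  cont_prob N (deviate x i y) t = (1 - y t) * others_stay.
Proof.
  unfold cont_prob. rewrite (Rprod_upto_extract N _ i Hi).
  unfold deviate at 1. rewrite Nat.eqb_refl. f_equal.
  apply Rprod_upto_ext. intros k Hk. destruct (Nat.eqb_spec k i) as [|Hki]; auto.
  unfold deviate. apply Nat.eqb_neq in Hki. rewrite Hki, (Hst k t Hk). reflexivity.
Qed.

End Stationary.

Lemma Un_cv_ext (u w : nat -> R) l : (forall n, u n = w n) -> Un_cv w l -> Un_cv u l.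
Proof. intros H Hw eps He. destruct (Hw eps He) as [K HK]. exists K. intros n Hn. rewrite H. auto. Qed.

Lemma Un_cv_const c : Un_cv (fun _ => c) c.
Proof. intros eps He. exists 0%nat. intros. unfold Rdist. rewrite Rminus_diag, Rabs_R0. auto. Qed.

Lemma Un_cv_pow b : 0 <= b < 1 -> Un_cv (fun n => b ^ n) 0.
Proof.
  intros Hb eps He. destruct (pow_lt_1_zero b) with eps as [M HM]; auto.
  - rewrite Rabs_right; lra.
  - exists M. intros n Hn. unfold Rdist. rewrite Rminus_0_r. auto.
Qed.

Lemma Un_cv_affine_pow M K b : 0 <= b < 1 -> Un_cv (fun n => M + b ^ n * K) M.
Proof.
  intro Hb. pose proof (CV_plus _ _ _ _ (Un_cv_const M)
                          (CV_mult _ _ _ _ (Un_cv_pow b Hb) (Un_cv_const K))) as H.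
  rewrite Rmult_0_l, Rplus_0_r in H. exact H.
Qed.

(* One-player stopping problem: at stage [t], still alive with probability [s t], the player
   quits with probability [y t] and receives [Q]; otherwise the opponents end the game with
   probability [u], paying [W] on average, and if the game never ends the payoff is [R0]. *)
Lemma stopping_value_le_max (s g y : nat -> R) Q W u R0 v :
  (forall t, 0 <= y t <= 1) -> s 0%nat = 1 ->
  (forall t, s (S t) = s t * ((1 - y t) * (1 - u))) ->
  (forall t, g t = y t * Q + (1 - y t) * (u * W)) ->
  0 <= u <= 1 -> (0 < u \/ W = R0) ->
  Un_cv (fun n => Rsum_list (map (fun t => s t * g t) (seq 0 n)) + s n * R0) v ->
  v <= Rmax Q W.
Proof.
  intros Hy Hs0 HsS Hg Hu Hcase Hv.
  set (M := Rmax Q W). assert (HQ : Q <= M) by apply Rmax_l. assert (HW : W <= M) by apply Rmax_r.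
  assert (Hsurv : forall n, 0 <= s n <= (1 - u) ^ n).
  { induction n as [|n [H0 H1]]; [rewrite Hs0; simpl; lra|].
    rewrite HsS. simpl. specialize (Hy n).
    assert (0 <= (1 - y n) * (1 - u) <= 1 - u) by nra.
    split; [nra|]. apply Rle_trans with ((1 - u) ^ n * (1 - u)); [|lra].
    apply Rmult_le_compat; lra. }
  (* [M] is an upper bound for the value of every continuation *)
  assert (Hinv : forall n, Rsum_list (map (fun t => s t * g t) (seq 0 n)) + s n * M <= M).
  { induction n as [|n IH]; [rewrite Hs0; unfold Rsum_list; simpl; lra|].
    rewrite Rsum_list_seq_S, HsS, Hg. destruct (Hsurv n) as [H0 _]. specialize (Hy n).
    assert (0 <= (1 - y n) * u) by nra.
    assert (s n * (y n * (Q - M) + (1 - y n) * u * (W - M)) <= 0).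
    { rewrite <- (Rmult_0_r (s n)). apply Rmult_le_compat_l; [lra|]. nra. }
    nra. }
  destruct Hcase as [Hu0 | HWR].
  - eapply (@Rle_cv_lim _ (fun n => M + (1 - u) ^ n * Rabs (R0 - M)) _ _); [intro n| exact Hv|].
    + destruct (Hsurv n) as [H0 H1]. specialize (Hinv n).
      assert (s n * (R0 - M) <= s n * Rabs (R0 - M)) by (apply Rmult_le_compat_l; auto; apply Rle_abs).
      assert (s n * Rabs (R0 - M) <= (1 - u) ^ n * Rabs (R0 - M))
        by (apply Rmult_le_compat_r; auto; apply Rabs_pos).
      nra.
    + apply Un_cv_affine_pow. lra.
  - eapply (@Rle_cv_lim _ (fun _ => M) _ _); [intro n| exact Hv| apply Un_cv_const].
    destruct (Hsurv n) as [H0 _]. specialize (Hinv n).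
    assert (s n * R0 <= s n * M) by (apply Rmult_le_compat_l; lra). lra.
Qed.

Lemma geometric_payoff_cv (s : nat -> R) G b R0 :
  s 0%nat = 1 -> (forall t, s (S t) = s t * b) -> 0 <= b < 1 ->
  Un_cv (fun n => Rsum_list (map (fun t => s t * G) (seq 0 n)) + s n * R0) (G / (1 - b)).
Proof.
  intros Hs0 HsS Hb.
  assert (Hs : forall n, s n = b ^ n) by (induction n; [auto| rewrite HsS, IHn; simpl; ring]).
  assert (Hsum : forall n, Rsum_list (map (fun t => s t * G) (seq 0 n))
                           = G / (1 - b) - b ^ n * (G / (1 - b))).
  { induction n as [|n IH]; [unfold Rsum_list; simpl; ring|].
    rewrite Rsum_list_seq_S, IH, Hs. simpl. field. lra. }
  eapply Un_cv_ext; [| exact (Un_cv_affine_pow (G / (1 - b)) (R0 - G / (1 - b)) b Hb)].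
  intro n. rewrite Hsum, Hs. ring.
Qed.

Definition eps_best_reply (N : nat) (r : payoffs) (eps : R) (x : profile) (i : nat) : Prop :=
  exists v, payoff_is N r x i v /\
    forall y, is_strategy y -> forall v', payoff_is N r (deviate x i y) i v' -> v >= v' - eps.

Section Best_reply.

Variables (N : nat) (r : payoffs) (x : profile) (i : nat).
Hypotheses (Hst : stationary N x) (Hi : (i < N)%nat).

Let Q := quit_value N r x i.
Let C := cont_value N r x i.

Lemma surv_S_deviate y t :
  surv N (deviate x i y) (S t) = surv N (deviate x i y) t * ((1 - y t) * others_stay N x i).
Proof. unfold surv. rewrite Rprod_upto_S, cont_prob_deviate; auto. Qed.

Lemma partial_payoff_deviate y n :
  partial_payoff N r (deviate x i y) i n =
  Rsum_list (map (fun t => surv N (deviate x i y) t * (y t * Q + (1 - y t) * C)) (seq 0 n))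
  + surv N (deviate x i y) n * r (empty_set N) i.
Proof.
  unfold partial_payoff. f_equal. apply Rsum_list_map_ext_in. intros t _.
  rewrite stage_sum_expect, expect_stage_deviate; auto.
Qed.

(* [W] is the value of never quitting: it is [C / u] when the opponents quit with positive
   probability [u] at each stage, and [r^emptyset_i] when they never quit. *)
Lemma payoff_deviate_le y u W v' : is_strategy y ->
  0 <= u <= 1 -> others_stay N x i = 1 - u -> C = u * W -> (0 < u \/ W = r (empty_set N) i) ->
  payoff_is N r (deviate x i y) i v' -> v' <= Rmax Q W.
Proof.
  intros Hy Hu Ha HC Hcase Hv.
  apply (stopping_value_le_max (surv N (deviate x i y)) (fun t => y t * Q + (1 - y t) * C)
           y Q W u (r (empty_set N) i) v'); auto.
  - intro t. rewrite surv_S_deviate, Ha. reflexivity.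
  - intro t. rewrite HC. reflexivity.
  - eapply Un_cv_ext; [| exact Hv]. intro n. rewrite partial_payoff_deviate. reflexivity.
Qed.

Lemma payoff_stationary u : is_profile N x ->
  0 <= u <= 1 -> others_stay N x i = 1 - u -> 0 < x i 0%nat + u - x i 0%nat * u ->
  payoff_is N r x i ((x i 0%nat * Q + (1 - x i 0%nat) * C) / (x i 0%nat + u - x i 0%nat * u)).
Proof.
  intros Hpr Hu Ha HD. pose proof (Hpr i Hi 0%nat) as Hs.
  replace (x i 0%nat + u - x i 0%nat * u) with (1 - (1 - x i 0%nat) * (1 - u)) by ring.
  unfold payoff_is. rewrite <- (deviate_self x i).
  eapply Un_cv_ext; [intro n; apply partial_payoff_deviate|].
  rewrite deviate_self.
  eapply Un_cv_ext; [| apply (geometric_payoff_cv (surv N x) _ ((1 - x i 0%nat) * (1 - u)))].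
  - intro n. simpl. f_equal. apply Rsum_list_map_ext_in. intros t _. rewrite (Hst i t Hi). reflexivity.
  - reflexivity.
  - intro t. rewrite <- (deviate_self x i) at 1. rewrite surv_S_deviate, deviate_self, Ha, (Hst i t Hi).
    reflexivity.
  - split; [apply Rmult_le_pos|]; lra.
Qed.

Lemma payoff_never_quit : x i 0%nat = 0 -> others_stay N x i = 1 -> C = 0 ->
  payoff_is N r x i (r (empty_set N) i).
Proof.
  intros Hx Ha HC. unfold payoff_is.
  assert (Hsurv : forall t, surv N x t = 1).
  { induction t as [|t IH]; [reflexivity|]. rewrite <- (deviate_self x i).
    rewrite surv_S_deviate, deviate_self, IH, Ha, (Hst i t Hi), Hx. ring. }
  intros eps He. exists 0%nat. intros n _. rewrite <- (deviate_self x i), partial_payoff_deviate.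
  rewrite deviate_self, Hsurv. rewrite Rsum_list_map_ext_in with (g := fun _ => 0).
  - replace (Rsum_list (map (fun _ => 0) (seq 0 n))) with 0.
    + unfold Rdist. rewrite Rplus_0_l, Rmult_1_l, Rminus_diag, Rabs_R0. exact He.
    + induction n as [|n IH]; [reflexivity|]. rewrite Rsum_list_seq_S, <- IH. ring.
  - intros t _. rewrite Hsurv, (Hst i t Hi), Hx, HC. ring.
Qed.

Lemma eps_best_reply_intro eps v u W :
  0 <= u <= 1 -> others_stay N x i = 1 - u -> C = u * W -> (0 < u \/ W = r (empty_set N) i) ->
  payoff_is N r x i v -> Q - eps <= v -> W - eps <= v -> eps_best_reply N r eps x i.
Proof.
  intros Hu Ha HC Hcase Hv HQ HW. exists v. split; [exact Hv|].
  intros y Hy v' Hv'. pose proof (payoff_deviate_le y u W v' Hy Hu Ha HC Hcase Hv') as Hle.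
  unfold Rmax in Hle. destruct (Rle_dec Q W); lra.
Qed.

(* The payoff of [x] is the average of [Q] and [W] with weights proportional to [x i 0] and
   [(1 - x i 0) * u], so the last two hypotheses say that it is within [eps] of both. *)
Lemma stationary_best_reply eps u W : is_profile N x ->
  0 <= u <= 1 -> others_stay N x i = 1 - u -> C = u * W -> (0 < u \/ W = r (empty_set N) i) ->
  0 < x i 0%nat + u - x i 0%nat * u ->
  x i 0%nat * (Q - W) >= - eps * (x i 0%nat + u - x i 0%nat * u) ->
  (1 - x i 0%nat) * u * (W - Q) >= - eps * (x i 0%nat + u - x i 0%nat * u) ->
  eps_best_reply N r eps x i.
Proof.
  intros Hpr Hu Ha HC Hcase HD H1 H2.
  apply (eps_best_reply_intro eps _ u W Hu Ha HC Hcase (payoff_stationary u Hpr Hu Ha HD));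
    apply Rmult_le_reg_r with (x i 0%nat + u - x i 0%nat * u); auto;
    unfold Rdiv; rewrite Rmult_assoc, Rinv_l by lra; rewrite HC; nra.
Qed.

End Best_reply.

Lemma nonempty_map_true (c : nat -> bool) n k :
  (k < n)%nat -> c k = true -> nonempty (map c (seq 0 n)) = true.
Proof.
  intros Hk Hc. apply existsb_exists. exists true. split; auto.
  apply in_map_iff. exists k. split; auto. apply in_seq. lia.
Qed.

Lemma nonempty_map_false (c : nat -> bool) n :
  (forall k, (k < n)%nat -> c k = false) -> nonempty (map c (seq 0 n)) = false.
Proof.
  intro H. apply Bool.not_true_iff_false. intro Hne.
  apply existsb_exists in Hne as [b [Hb Hbt]]. subst.
  apply in_map_iff in Hb as [k [Hk Hin]]. apply in_seq in Hin.
  rewrite H in Hk by lia. discriminate.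
Qed.

Section Stage_values.

Variables (N : nat) (r : payoffs).
Hypothesis hr : forall S i, length S = N -> (i < N)%nat -> -1 <= r S i <= 1.
Hypothesis hdiag : forall i, (i < N)%nat -> r (singleton N i) i = 0.

Lemma stage_payoff_nobody i c :
  (forall k, (k < N)%nat -> c k = false) -> stage_payoff r i (map c (seq 0 N)) = 0.
Proof. intro H. unfold stage_payoff. rewrite nonempty_map_false; auto. Qed.

Lemma stage_payoff_singleton i c k : (k < N)%nat ->
  (forall k', (k' < N)%nat -> c k' = Nat.eqb k' k) ->
  stage_payoff r i (map c (seq 0 N)) = r (singleton N k) i.
Proof.
  intros Hk H. unfold stage_payoff. rewrite (nonempty_map_true c N k Hk).
  - unfold singleton. f_equal. apply map_ext_in. intros a Ha. apply in_seq in Ha. apply H. lia.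
  - rewrite H by auto. apply Nat.eqb_refl.
Qed.

Lemma stage_payoff_bound i c : (i < N)%nat -> -1 <= stage_payoff r i (map c (seq 0 N)) <= 1.
Proof.
  intro Hi. unfold stage_payoff. destruct nonempty; [|lra].
  apply hr; auto. rewrite length_map, length_seq. reflexivity.
Qed.

Variables (x : profile) (i : nat).
Hypothesis Hi : (i < N)%nat.

Lemma scaled_stage_payoff_bound (w : R) c : 0 <= w ->
  - w <= w * stage_payoff r i (map c (seq 0 N)) <= w.
Proof. intro Hw. pose proof (stage_payoff_bound i c Hi). split; nra. Qed.

Ltac eqb_cases :=
  repeat match goal with |- context [Nat.eqb ?a ?b] => destruct (Nat.eqb_spec a b) end.

Ltac solve_bits := intros; unfold set_bit; eqb_cases; subst; first [reflexivity | congruence | lia].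

Ltac solve_weights Hxs :=
  intros; unfold set_weight, set_bit, stage_weight, dirac; eqb_cases; subst; try congruence;
  try rewrite Hxs by (auto; lia); try reflexivity;
  match goal with b : bool |- _ => destruct b; simpl; ring end.

Lemma values_alone : (forall k, (k < N)%nat -> k <> i -> x k 0%nat = 0) ->
  others_stay N x i = 1 /\ cont_value N r x i = 0 /\ quit_value N r x i = 0.
Proof.
  intro Hx0. split; [|split].
  - apply Rprod_upto_eq1. intros k Hk. destruct (Nat.eqb_spec k i); [reflexivity|].
    rewrite Hx0 by auto. ring.
  - unfold cont_value. rewrite (expect_subsets_dirac N _ (set_bit (fun _ => false) i false)).
    + apply stage_payoff_nobody. solve_bits.
    + solve_weights Hx0.
  - unfold quit_value. rewrite (expect_subsets_dirac N _ (set_bit (fun _ => false) i true)).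
    + rewrite (stage_payoff_singleton i _ i Hi); [apply hdiag; auto|]. solve_bits.
    + solve_weights Hx0.
Qed.

Lemma values_one_opponent k p : (k < N)%nat -> k <> i -> x k 0%nat = p -> 0 <= p <= 1 ->
  (forall j, (j < N)%nat -> j <> i -> j <> k -> x j 0%nat = 0) ->
  others_stay N x i = 1 - p /\ cont_value N r x i = p * r (singleton N k) i /\
  - p <= quit_value N r x i <= p.
Proof.
  intros Hk Hki Hxk Hp Hx0. split; [|split].
  - unfold others_stay. rewrite (Rprod_upto_single N _ k Hk).
    + apply Nat.eqb_neq in Hki. rewrite Hki, Hxk. reflexivity.
    + intros j Hj Hjk. destruct (Nat.eqb_spec j i); [reflexivity|]. rewrite Hx0 by auto. ring.
  - unfold cont_value.
    rewrite (expect_subsets_one_random N _ _ k p (set_bit (fun _ => false) i false) Hk).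
    + rewrite (stage_payoff_singleton i _ k Hk), stage_payoff_nobody; [ring| solve_bits..].
    + solve_weights Hx0.
    + solve_weights Hx0.
  - unfold quit_value.
    rewrite (expect_subsets_one_random N _ _ k p (set_bit (fun _ => false) i true) Hk).
    + rewrite (stage_payoff_singleton i (set_bit _ k false) i Hi), hdiag by (auto; solve_bits).
      pose proof (scaled_stage_payoff_bound p (set_bit (set_bit (fun _ => false) i true) k true) ltac:(lra)).
      lra.
    + solve_weights Hx0.
    + solve_weights Hx0.
Qed.

Lemma values_two_opponents k1 k2 p q : (k1 < N)%nat -> (k2 < N)%nat -> k1 <> k2 ->
  k1 <> i -> k2 <> i -> x k1 0%nat = p -> x k2 0%nat = q -> 0 <= p <= 1 -> 0 <= q <= 1 ->
  (forall j, (j < N)%nat -> j <> i -> j <> k1 -> j <> k2 -> x j 0%nat = 0) ->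
  others_stay N x i = (1 - p) * (1 - q) /\
  cont_value N r x i >= p * (1 - q) * r (singleton N k1) i - q /\
  quit_value N r x i <= p + q.
Proof.
  intros H1 H2 H12 H1i H2i Hx1 Hx2 Hp Hq Hx0. split; [|split].
  - unfold others_stay. rewrite (Rprod_upto_pair N _ k1 k2 H1 H2 H12).
    + apply Nat.eqb_neq in H1i, H2i. rewrite H1i, H2i, Hx1, Hx2. reflexivity.
    + intros j Hj Hj1 Hj2. destruct (Nat.eqb_spec j i); [reflexivity|]. rewrite Hx0 by auto. ring.
  - unfold cont_value.
    rewrite (expect_subsets_two_random N _ _ k1 k2 p q (set_bit (fun _ => false) i false) H1 H2 H12);
      [| solve_weights Hx0 ..].
    rewrite (stage_payoff_singleton i (set_bit (set_bit _ k1 true) k2 false) k1 H1),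
            (stage_payoff_nobody i (set_bit (set_bit _ k1 false) k2 false)) by solve_bits.
    set (c := set_bit (fun _ => false) i false).
    pose proof (scaled_stage_payoff_bound (p * q) (set_bit (set_bit c k1 true) k2 true) ltac:(nra)).
    pose proof (scaled_stage_payoff_bound ((1 - p) * q) (set_bit (set_bit c k1 false) k2 true) ltac:(nra)).
    nra.
  - unfold quit_value.
    rewrite (expect_subsets_two_random N _ _ k1 k2 p q (set_bit (fun _ => false) i true) H1 H2 H12);
      [| solve_weights Hx0 ..].
    rewrite (stage_payoff_singleton i (set_bit (set_bit _ k1 false) k2 false) i Hi), hdiag
      by (auto; solve_bits).
    set (c := set_bit (fun _ => false) i true).
    pose proof (scaled_stage_payoff_bound (p * q) (set_bit (set_bit c k1 true) k2 true) ltac:(nra)).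
    pose proof (scaled_stage_payoff_bound (p * (1 - q)) (set_bit (set_bit c k1 true) k2 false) ltac:(nra)).
    pose proof (scaled_stage_payoff_bound ((1 - p) * q) (set_bit (set_bit c k1 false) k2 true) ltac:(nra)).
    nra.
Qed.

End Stage_values.

Lemma eps_equilibrium_intro N r eps x : is_profile N x ->
  (forall i, (i < N)%nat -> eps_best_reply N r eps x i) -> eps_equilibrium N r eps x.
Proof. intros Hpr H. split; [exact Hpr | exact H]. Qed.

Section Equilibria.

Variables (N : nat) (r : payoffs) (eps : R).
Hypothesis hr : forall S i, length S = N -> (i < N)%nat -> -1 <= r S i <= 1.
Hypothesis hdiag : forall i, (i < N)%nat -> r (singleton N i) i = 0.

Lemma never_quit_equilibrium : eps > 0 -> (forall i, (i < N)%nat -> r (empty_set N) i > 0) ->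
  eps_equilibrium N r eps (fun _ _ => 0).
Proof.
  intros Heps Hpos. apply eps_equilibrium_intro; [intros i _ t; lra|]. intros i Hi.
  destruct (values_alone N r hdiag (fun _ _ => 0) i Hi) as [Ha [HC HQ]]; [reflexivity|].
  assert (Hst : stationary N (fun _ _ => 0)) by (intros k t _; reflexivity).
  apply (eps_best_reply_intro N r _ i Hst Hi eps (r (empty_set N) i) 0 (r (empty_set N) i));
    rewrite ?HC, ?HQ; try lra.
  - apply payoff_never_quit; auto.
  - specialize (Hpos i Hi). lra.
Qed.

Lemma singleton_payoff_bound j i : (j < N)%nat -> (i < N)%nat -> -1 <= r (singleton N j) i <= 1.
Proof.
  intros Hj Hi. apply hr; auto. unfold singleton. rewrite length_map, length_seq. reflexivity.
Qed.

Definition quit_one (k : nat) (p : R) : profile := fun j _ => if Nat.eqb j k then p else 0.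

(* [k] cannot gain by waiting since [r^emptyset_k <= 0], and every other player prefers [k] to
   quit. *)
Lemma quit_one_equilibrium k p : (k < N)%nat -> r (empty_set N) k <= 0 -> 0 < p <= 1 -> p <= eps ->
  (forall i, (i < N)%nat -> i <> k -> r (singleton N k) i > 0) ->
  eps_equilibrium N r eps (quit_one k p).
Proof.
  intros Hk Hk0 Hp Hpe Hsink.
  assert (Hst : stationary N (quit_one k p)) by (intros i t _; reflexivity).
  apply eps_equilibrium_intro; [intros i _ t; unfold quit_one; destruct (i =? k); lra|].
  intros i Hi. destruct (Nat.eq_dec i k) as [->|Hik].
  - destruct (values_alone N r hdiag (quit_one k p) k Hk) as [Ha [HC HQ]].
    { intros j _ Hjk. unfold quit_one. apply Nat.eqb_neq in Hjk. rewrite Hjk. reflexivity. }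
    assert (Hxk : quit_one k p k 0%nat = p) by (unfold quit_one; rewrite Nat.eqb_refl; reflexivity).
    apply (stationary_best_reply N r _ k Hst Hk eps 0 (r (empty_set N) k));
      rewrite ?Ha, ?HC, ?HQ, ?Hxk; try nra.
    intros j _ t. unfold quit_one. destruct (j =? k); lra.
  - assert (Hxi : quit_one k p i 0%nat = 0)
      by (unfold quit_one; apply Nat.eqb_neq in Hik; rewrite Hik; reflexivity).
    destruct (values_one_opponent N r hr hdiag (quit_one k p) i Hi k p) as [Ha [HC HQ]]; auto; try lra.
    { unfold quit_one. rewrite Nat.eqb_refl. reflexivity. }
    { intros j _ _ Hjk. unfold quit_one. apply Nat.eqb_neq in Hjk. rewrite Hjk. reflexivity. }
    pose proof (Hsink i Hi Hik).
    apply (stationary_best_reply N r _ i Hst Hi eps p (r (singleton N k) i));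
      rewrite ?Ha, ?HC, ?Hxi; try nra.
    intros j _ t. unfold quit_one. destruct (j =? k); lra.
Qed.

Definition quit_two (k1 k2 : nat) (p q : R) : profile :=
  fun j _ => if Nat.eqb j k1 then p else if Nat.eqb j k2 then q else 0.

Section Two_quitters.

Variables (k1 k2 : nat) (rho p q : R).
Hypotheses (Hk1 : (k1 < N)%nat) (Hk2 : (k2 < N)%nat) (Hk12 : k1 <> k2).
Hypothesis Hthreat : r (singleton N k2) k1 <= 0.
Hypothesis Hsink : forall j, (j < N)%nat -> j <> k1 -> r (singleton N k1) j >= rho.
Hypotheses (Hrho : rho > 0) (Hp : 0 < p <= 1 / 2) (Hq : 0 < q) (Hpq : p + q <= eps).
Hypotheses (Hq_eps : 2 * q <= eps * p) (Hq_rho : 2 * q <= p * rho).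

Let x := quit_two k1 k2 p q.

Lemma q_le : q <= p / 2.
Proof.
  pose proof (Hsink k2 Hk2 (not_eq_sym Hk12)). pose proof (singleton_payoff_bound k1 k2 Hk1 Hk2). nra.
Qed.

Lemma quit_two_stationary : stationary N x.
Proof. intros i t _. reflexivity. Qed.

Lemma quit_two_profile : is_profile N x.
Proof.
  pose proof q_le. intros i _ t. unfold x, quit_two.
  destruct (i =? k1); [lra|]. destruct (i =? k2); lra.
Qed.

Lemma quit_two_k1 : x k1 0%nat = p.
Proof. unfold x, quit_two. rewrite Nat.eqb_refl. reflexivity. Qed.

Lemma quit_two_k2 : x k2 0%nat = q.
Proof.
  unfold x, quit_two. rewrite Nat.eqb_refl.
  destruct (Nat.eqb_spec k2 k1); [congruence | reflexivity].
Qed.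

Lemma quit_two_other j : j <> k1 -> j <> k2 -> x j 0%nat = 0.
Proof. intros H1 H2. unfold x, quit_two. apply Nat.eqb_neq in H1, H2. rewrite H1, H2. reflexivity. Qed.

(* [k1] quits often but cannot be hurt much by the rare quitting of [k2], and would get
   [r^(k2)_(k1) <= 0] by waiting for [k2] alone. *)
Lemma quit_two_best_reply_k1 : eps_best_reply N r eps x k1.
Proof.
  pose proof q_le. pose proof (singleton_payoff_bound k2 k1 Hk2 Hk1).
  destruct (values_one_opponent N r hr hdiag x k1 Hk1 k2 q) as [Ha [HC HQ]]; auto; try lra.
  - apply quit_two_k2.
  - intros j _ Hj1 Hj2. apply quit_two_other; auto.
  - assert ((1 - p) * q * (r (singleton N k2) k1 - quit_value N r x k1) >= - (2 * q))
      by (assert (0 <= (1 - p) * q <= q) by nra; nra).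
    apply (stationary_best_reply N r x k1 quit_two_stationary Hk1 eps q (r (singleton N k2) k1));
      rewrite ?Ha, ?HC, ?quit_two_k1; try nra.
    apply quit_two_profile.
Qed.

(* [k2] gains at least [rho] from waiting for [k1], and quits so rarely that this is
   almost what it gets. *)
Lemma quit_two_best_reply_k2 : eps_best_reply N r eps x k2.
Proof.
  pose proof (Hsink k2 Hk2 (not_eq_sym Hk12)). pose proof q_le.
  destruct (values_one_opponent N r hr hdiag x k2 Hk2 k1 p) as [Ha [HC HQ]]; auto; try lra.
  - apply quit_two_k1.
  - intros j _ Hj2 Hj1. apply quit_two_other; auto.
  - pose proof (singleton_payoff_bound k1 k2 Hk1 Hk2).
    assert (q * (quit_value N r x k2 - r (singleton N k1) k2) >= - (2 * q)) by nra.
    assert ((1 - q) * p * (r (singleton N k1) k2 - quit_value N r x k2) >= - (p * p))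
      by (assert (0 <= (1 - q) * p <= p) by nra; nra).
    assert (eps * (q + p - q * p) >= p * p) by (assert (0 <= q * (1 - p)) by nra; nra).
    apply (stationary_best_reply N r x k2 quit_two_stationary Hk2 eps p (r (singleton N k1) k2));
      rewrite ?Ha, ?HC, ?quit_two_k2; try nra.
    apply quit_two_profile.
Qed.

(* Every other player has a nonnegative continuation value, since the rare quitting of [k2]
   cannot outweigh the gain of at least [rho] from [k1]. *)
Lemma quit_two_best_reply_other i : (i < N)%nat -> i <> k1 -> i <> k2 -> eps_best_reply N r eps x i.
Proof.
  intros Hi Hi1 Hi2. pose proof (Hsink i Hi Hi1). pose proof q_le.
  destruct (values_two_opponents N r hr hdiag x i Hi k1 k2 p q) as [Ha [HC HQ]]; auto; try lra.
  - apply quit_two_k1.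
  - apply quit_two_k2.
  - intros j _ _ Hj1 Hj2. apply quit_two_other; auto.
  - set (u := 1 - (1 - p) * (1 - q)).
    assert (Hu : 0 < u <= 1) by (unfold u; nra).
    assert (p * (1 - q) * (r (singleton N k1) i - rho) >= 0)
      by (apply Rle_ge, Rmult_le_pos; [apply Rmult_le_pos|]; lra).
    assert (HC0 : cont_value N r x i >= 0) by nra.
    assert (cont_value N r x i / u >= 0)
      by (apply Rle_ge; unfold Rdiv; apply Rmult_le_pos; [lra| apply Rlt_le, Rinv_0_lt_compat; lra]).
    apply (stationary_best_reply N r x i quit_two_stationary Hi eps u (cont_value N r x i / u));
      rewrite ?quit_two_other by auto; try nra.
    + apply quit_two_profile.
    + rewrite Ha. unfold u. ring.
    + field. lra.
Qed.

Lemma quit_two_equilibrium : eps_equilibrium N r eps x.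
Proof.
  apply eps_equilibrium_intro; [exact quit_two_profile|]. intros i Hi.
  destruct (Nat.eq_dec i k1) as [->|Hi1]; [exact quit_two_best_reply_k1|].
  destruct (Nat.eq_dec i k2) as [->|Hi2]; [exact quit_two_best_reply_k2|].
  apply quit_two_best_reply_other; auto.
Qed.

End Two_quitters.

End Equilibria.

Lemma quit_two_exists N r eps k1 k2 rho : eps > 0 ->
  (forall S i, length S = N -> (i < N)%nat -> -1 <= r S i <= 1) ->
  (forall i, (i < N)%nat -> r (singleton N i) i = 0) ->
  (k1 < N)%nat -> (k2 < N)%nat -> k1 <> k2 -> r (singleton N k2) k1 <= 0 -> rho > 0 ->
  (forall j, (j < N)%nat -> j <> k1 -> r (singleton N k1) j >= rho) ->
  exists x, stationary N x /\ eps_equilibrium N r eps x.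
Proof.
  intros Heps hr hdiag Hk1 Hk2 Hk12 Hthreat Hrho Hsink.
  set (e := Rmin eps 1). set (p := e / 2). set (q := p * Rmin e rho / 4).
  assert (He : 0 < e <= 1 /\ e <= eps) by (unfold e, Rmin; destruct Rle_dec; lra).
  assert (Hm : 0 < Rmin e rho <= e /\ Rmin e rho <= rho) by (unfold Rmin; destruct Rle_dec; lra).
  exists (quit_two k1 k2 p q). split; [intros i t _; reflexivity|].
  apply (quit_two_equilibrium N r eps hr hdiag k1 k2 rho p q); auto; unfold q, p in *; nra.
Qed.

Lemma in_I_antitone N r l l' i : (l <= l')%nat -> in_I N r l' i -> in_I N r l i.
Proof. induction 1 as [|l' _ IH]; auto. intros [H _]. exact (IH H). Qed.

Lemma abnormal_uniform N r :
  (forall i, (i < N)%nat -> ~ normal N r i) -> exists L, forall i, (i < N)%nat -> ~ in_I N r L i.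
Proof.
  intro habn. enough (H : forall n, (n <= N)%nat -> exists L, forall i, (i < n)%nat -> ~ in_I N r L i).
  { apply H. lia. }
  induction n as [|n IH]; intro Hn; [exists 0%nat; lia|].
  destruct (IH ltac:(lia)) as [L HL]. destruct (not_all_ex_not _ _ (habn n ltac:(lia))) as [Ln HLn].
  exists (L + Ln)%nat. intros i Hi Hin. destruct (Nat.eq_dec i n) as [->|Hne].
  - apply HLn, (in_I_antitone N r Ln (L + Ln)); auto; lia.
  - apply (HL i); [lia|]. apply (in_I_antitone N r L (L + Ln)); auto; lia.
Qed.

Lemma exists_last (P : nat -> Prop) L : P 0%nat -> ~ P L -> exists l, P l /\ ~ P (S l).
Proof.
  intros H0 HL. induction L as [|L IH]; [contradiction|].
  destruct (classic (P L)) as [HPL|HPL]; [exists L; auto | apply IH; exact HPL].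
Qed.

Lemma last_level_payoff_pos N r l k j : in_I N r l k -> (forall i, ~ in_I N r (S l) i) ->
  (j < N)%nat -> j <> k -> r (singleton N k) j > 0.
Proof.
  intros Hk Hempty Hj Hjk. apply Rnot_le_gt. intro Hle. apply (Hempty j).
  enough (H : forall m, (m <= S l)%nat -> in_I N r m j) by (apply H; lia).
  induction m as [|m IH]; intro Hm; [exact Hj|]. split; [apply IH; lia|].
  exists k. repeat split; auto. apply (in_I_antitone N r m l); auto. lia.
Qed.

Lemma finite_pos_lower_bound (f : nat -> R) (P : nat -> Prop) N :
  (forall j, (j < N)%nat -> P j -> f j > 0) ->
  exists m, m > 0 /\ forall j, (j < N)%nat -> P j -> f j >= m.
Proof.
  induction N as [|N IH]; intro H; [exists 1; split; [lra | intros; lia]|].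
  destruct IH as [m [Hm Hmin]]; [intros; apply H; auto|].
  destruct (classic (P N)) as [HP|HP].
  - pose proof (H N ltac:(lia) HP).
    exists (Rmin m (f N)). split; [unfold Rmin; destruct Rle_dec; lra|].
    intros j Hj HPj. destruct (Nat.eq_dec j N) as [->|Hne]; [apply Rle_ge, Rmin_r|].
    pose proof (Hmin j ltac:(lia) HPj). pose proof (Rmin_l m (f N)). lra.
  - exists m. split; auto. intros j Hj HPj. destruct (Nat.eq_dec j N) as [->|Hne]; [contradiction|].
    apply Hmin; auto; lia.
Qed.

Lemma no_threat_equilibrium N r eps : eps > 0 ->
  (forall S i, length S = N -> (i < N)%nat -> -1 <= r S i <= 1) ->
  (forall i, (i < N)%nat -> r (singleton N i) i = 0) ->
  (forall i j, (i < N)%nat -> (j < N)%nat -> j <> i -> r (singleton N j) i > 0) ->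
  exists x, stationary N x /\ eps_equilibrium N r eps x.
Proof.
  intros Heps hr hdiag Hpos.
  destruct (classic (exists k, (k < N)%nat /\ r (empty_set N) k <= 0)) as [[k [Hk Hk0]]|Hnone].
  - exists (quit_one k (Rmin eps 1)). split; [intros i t _; reflexivity|].
    apply quit_one_equilibrium; auto.
    + split; [apply Rmin_pos; lra | apply Rmin_r].
    + apply Rmin_l.
  - exists (fun _ _ => 0). split; [intros i t _; reflexivity|].
    apply never_quit_equilibrium; auto. intros i Hi. apply Rnot_le_gt. intro Hle. eauto.
Qed.

Lemma threat_equilibrium N r eps : eps > 0 ->
  (forall S i, length S = N -> (i < N)%nat -> -1 <= r S i <= 1) ->
  (forall i, (i < N)%nat -> r (singleton N i) i = 0) ->
  (forall i, (i < N)%nat -> ~ normal N r i) -> (exists i, in_I N r 1 i) ->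
  exists x, stationary N x /\ eps_equilibrium N r eps x.
Proof.
  intros Heps hr hdiag habn HI1.
  destruct (abnormal_uniform N r habn) as [L HL].
  destruct (exists_last (fun m => exists i, in_I N r (S m) i) L) as [m [[k1 Hk1] Hlast]]; auto.
  { intros [i Hi]. apply (HL i); [exact (in_I_antitone N r 0 (S L) i ltac:(lia) Hi)|].
    exact (in_I_antitone N r L (S L) i ltac:(lia) Hi). }
  assert (Hsink : forall j, (j < N)%nat -> j <> k1 -> r (singleton N k1) j > 0).
  { intros j Hj Hjk. apply (last_level_payoff_pos N r (S m) k1 j); eauto. }
  destruct (finite_pos_lower_bound (fun j => r (singleton N k1) j) (fun j => j <> k1) N Hsink)
    as [rho [Hrho Hmin]].
  destruct Hk1 as [Hk1 [k2 [Hk2 [Hk21 Hthreat]]]].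
  apply (quit_two_exists N r eps k1 k2 rho); auto.
  - exact (in_I_antitone N r 0 m k1 ltac:(lia) Hk1).
  - exact (in_I_antitone N r 0 m k2 ltac:(lia) Hk2).
Qed.

Theorem lemma2 (N : nat) (r : payoffs)
  (hr : forall S i, length S = N -> (i < N)%nat -> -1 <= r S i <= 1)
  (hdiag : forall i, (i < N)%nat -> r (singleton N i) i = 0)
  (habn : forall i, (i < N)%nat -> ~ normal N r i) :
  forall eps : R, eps > 0 ->
    exists x : profile, stationary N x /\ eps_equilibrium N r eps x.
Proof.
  intros eps Heps.
  destruct (classic (exists i, in_I N r 1 i)) as [HI1|HI1].
  - exact (threat_equilibrium N r eps Heps hr hdiag habn HI1).
  - apply no_threat_equilibrium; auto. intros i j Hi Hj Hji. apply Rnot_le_gt. intro Hle.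
    apply HI1. exists i. split; [exact Hi|]. exists j. auto.
Qed.
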